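(* Suppose $1 \le p, p_1, p_2 < \infty$ and $0 \le \alpha_1, \alpha_2 \le 1$ satisfy $\alpha_1 + \alpha_2 = 1$ and $\frac1p = \frac{\alpha_1}{p_1} + \frac{\alpha_2}{p_2}$. Suppose also $A = A_1 + A_2$ (non-negative integers). Let $U \subset B_R$ be a finite union of the balls $B_{K^2}$. Then $$ \| E f \|_{\mathrm{BL}^p_{k,A}(U)} \le \| E f \|^{\alpha_1}_{\mathrm{BL}^{p_1}_{k,A_1}(U)} \| E f \|^{\alpha_2}_{\mathrm{BL}^{p_2}_{k,A_2}(U)}.$$
   Context: $E f(x) := \int_{B^{n-1}} e^{ i ( x' \cdot \omega + x_n | \omega |^2) } f(\omega)\, d \omega$. $G(\omega) = (-2\omega,1)/|(-2\omega,1)|$. $B^{n-1}$ is a disjoint union of approximate balls $\tau$ of radius $K^{-1}$, $f_\tau = f 1_\tau$, $G(\tau)$ the image of $\tau$ under $G$, $\mathrm{Angle}(G(\tau),V)$ the smallest angle between nonzero vectors of $V$ and of $G(\tau)$. $B_R$ is decomposed into balls $B_{K^2}$ of radius $K^2$. For such a ball and exponent $p$, $\mu^{(p)}_{Ef}(B_{K^2}) := \min_{V_1,\dots,V_A} \max_{\tau: \mathrm{Angle}(G(\tau),V_a) > K^{-1}\,\forall a} \int_{B_{K^2}} |Ef_\tau|^p$, minimum over $(k-1)$-dimensional subspaces $V_a$ of $\mathbb{R}^n$ (when $A=0$, the maximum over all $\tau$). For $U$ a finite union of balls $B_{K^2}$, $\|Ef\|^p_{\mathrm{BL}^p_{k,A}(U)}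 := \sum_{B_{K^2}\subset U}\mu^{(p)}_{Ef}(B_{K^2})$. *)

From HB Require Import structures.
From mathcomp Require Import all_boot all_order all_algebra.
From mathcomp Require Import all_classical all_reals all_analysis.
Unset Printing Implicit Defensive.
Import Order.TTheory GRing.Theory Num.Theory.
Local Open Scope classical_set_scope.
Local Open Scope ring_scope.

Section Defs.
Variable R : realType.

(** Lebesgue measure on R^n, with R^n represented as n.-tuple R
    (product sigma-algebra), built as iterated product measure:
    lebn 0 = Dirac mass at the empty tuple,
    lebn (n+1) = image of (Lebesgue on R) x (lebn n) under (t, v) |-> t :: v. *)
Fixpoint lebn (n : nat) : set (n.-tuple R) -> \bar R :=
  match n return set (n.-tuple R) -> \bar R with
  | 0 => @dirac _ (0.-tuple R) [tuple] R
  | n'.+1 => pushforward (product_measure1 lebesgue_measure (lebn n'))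
               (fun p : R * n'.-tuple R => [tuple of p.1 :: p.2])
  end.

Definition sqn (n : nat) (x : n.-tuple R) : R := \sum_(i < n) tnth x i ^+ 2.
Definition eucl (n : nat) (x : n.-tuple R) : R := Num.sqrt (sqn n x).

Definition eball (n : nat) (c : n.-tuple R) (r : R) : set (n.-tuple R) :=
  [set x | \sum_(i < n) (tnth x i - tnth c i) ^+ 2 < r ^+ 2].

(** the unit ball B^{n-1} of R^m, m = n-1 *)
Definition unit_ball (m : nat) : set (m.-tuple R) := [set w | sqn m w < 1].

Definition phase (m : nat) (x : m.+1.-tuple R) (w : m.-tuple R) : R :=
  \sum_(i < m) nth 0 x i * tnth w i + nth 0 x m * sqn m w.

(** A complex function f on R^m is given by its real and imaginary parts
    (fr, fi).  E f(x) = \int_{B^{m}} e^{i phase(x,w)} f(w) dw; we give its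
    real and imaginary parts. *)
Definition ExtRe (m : nat) (fr fi : m.-tuple R -> R) (x : m.+1.-tuple R) : R :=
  fine (\int[lebn m]_(w in unit_ball m)
          ((cos (phase m x w) * fr w - sin (phase m x w) * fi w)%:E))%E.
Definition ExtIm (m : nat) (fr fi : m.-tuple R -> R) (x : m.+1.-tuple R) : R :=
  fine (\int[lebn m]_(w in unit_ball m)
          ((sin (phase m x w) * fr w + cos (phase m x w) * fi w)%:E))%E.

Definition Ext_abs (m : nat) (fr fi : m.-tuple R -> R) (x : m.+1.-tuple R) : R :=
  Num.sqrt (ExtRe m fr fi x ^+ 2 + ExtIm m fr fi x ^+ 2).

Definition restr (m : nat) (tau : set (m.-tuple R)) (f : m.-tuple R -> R) :=
  fun w => f w * \1_tau w.

Definition rdot (n : nat) (v w : 'rV[R]_n) : R := \sum_(i < n) v 0 i * w 0 i.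
Definition rnorm (n : nat) (v : 'rV[R]_n) : R := Num.sqrt (rdot n v v).

Definition Gmap (m : nat) (w : m.-tuple R) : 'rV[R]_(m.+1) :=
  let v := \row_(i < m.+1) (if (i < m)%N then - 2 * nth 0 w i else 1) in
  (rnorm m.+1 v)^-1 *: v.

(** Angle(S, V) > c, where Angle(S,V) is the smallest (infimal) angle between
    nonzero vectors of V and nonzero vectors of S (+oo if there are none). *)
Definition angle_gt (n : nat) (S : set 'rV[R]_n) (V : {vspace 'rV[R]_n}) (c : R)
  : Prop :=
  exists e : R, c < e /\
    forall v w, v \in V -> v != 0 -> S w -> w != 0 ->
      e <= acos (rdot n v w / (rnorm n v * rnorm n w)).

Definition loc_int (m : nat) (fr fi : m.-tuple R -> R) (tau : set (m.-tuple R))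
  (B : set (m.+1.-tuple R)) (p : R) : R :=
  fine (\int[lebn m.+1]_(x in B)
          ((Ext_abs m (restr m tau fr) (restr m tau fi) x) `^ p)%:E)%E.

(** mu^{(p)}_{Ef}(B) : min over (k-1)-dimensional V_1..V_A of the max over
    the tau with Angle(G(tau), V_a) > K^{-1} for all a (max over the empty
    family being 0).  The set of candidate values is finite, so min = inf. *)
Definition mu_p (m : nat) (I : finType) (tau : I -> set (m.-tuple R)) (K : R)
  (k A : nat) (fr fi : m.-tuple R -> R) (B : set (m.+1.-tuple R)) (p : R) : R :=
  inf [set y | exists Vs : 'I_A -> {vspace 'rV[R]_(m.+1)},
        (forall a, \dim (Vs a) = k.-1) /\
        y = \big[Num.max/0]_(i : I |
               `[< forall a, angle_gt m.+1 (Gmap m @` tau i) (Vs a) K^-1 >])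
               loc_int m fr fi (tau i) B p].

(** || E f ||_{BL^p_{k,A}(U)}, U the union of the balls B_j, j in S *)
Definition BLnorm (m : nat) (I : finType) (tau : I -> set (m.-tuple R)) (K : R)
  (k A : nat) (fr fi : m.-tuple R -> R) (J : finType) (c : J -> m.+1.-tuple R)
  (S : {set J}) (p : R) : R :=
  (\sum_(j in S) mu_p m I tau K k A fr fi (eball m.+1 (c j) (K ^+ 2)) p) `^ (p^-1).

End Defs.

From HB Require Import structures.
From mathcomp Require Import all_boot all_order all_algebra.
From mathcomp Require Import all_classical all_reals all_analysis.
From mathcomp Require Import measurable_realfun lra.
Import Order.TTheory GRing.Theory Num.Theory.
Local Open Scope classical_set_scope.
Local Open Scope ring_scope.

(* For a fixed ball B of radius K^2 and a fixed cap tau, put t_i = alpha_i p / p_i,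
   so that t1 + t2 = 1 and p = t1 p1 + t2 p2. Hoelder's inequality with exponents
   1/t1 and 1/t2 gives
     int_B |E f_tau|^p <= (int_B |E f_tau|^p1)^t1 (int_B |E f_tau|^p2)^t2.
   Concatenating an optimal family of A1 subspaces for mu^(p1) with an optimal
   family of A2 subspaces for mu^(p2) gives a family of A subspaces; a cap
   transverse to all of them is transverse to both families, so on each ball
   mu^(p) <= (mu^(p1))^t1 (mu^(p2))^t2. Summing over the balls with the discrete
   Hoelder inequality and taking p-th roots, using t_i / p = alpha_i / p_i,
   gives the claim. *)

Section weighted_means.
Variable R : realType.

Lemma weighted_amgm (x y t1 t2 : R) : 0 <= x -> 0 <= y ->
  0 <= t1 -> 0 <= t2 -> t1 + t2 = 1 ->
  x `^ t1 * y `^ t2 <= t1 * x + t2 * y.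
Proof.
move=> x_ge0 y_ge0 t1_ge0 t2_ge0 t12.
have [t1_0|t1_neq0] := eqVneq t1 0.
  have t2_1 : t2 = 1 by rewrite -t12 t1_0 add0r.
  by rewrite t1_0 t2_1 powRr0 powRr1 // !mul0r !mul1r add0r.
have [t2_0|t2_neq0] := eqVneq t2 0.
  have t1_1 : t1 = 1 by rewrite -t12 t2_0 addr0.
  by rewrite t1_1 t2_0 powRr0 powRr1 // mulr1 mul1r mul0r addr0.
have t1_gt0 : 0 < t1 by rewrite lt0r t1_neq0.
have t2_gt0 : 0 < t2 by rewrite lt0r t2_neq0.
have := @conjugate_powR R (x `^ t1) (y `^ t2) t1^-1 t2^-1.
rewrite !powR_ge0 !invr_gt0 t1_gt0 t2_gt0 !invrK => /(_ isT isT isT isT t12).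
by rewrite -!powRrM !mulfV ?gt_eqF // !powRr1 // [t1 * _]mulrC [t2 * _]mulrC.
Qed.

Lemma hoelder_sum_powR (J : finType) (P : {pred J}) (a b : J -> R) (t1 t2 : R) :
  (forall j, 0 <= a j) -> (forall j, 0 <= b j) ->
  0 <= t1 -> 0 <= t2 -> t1 + t2 = 1 ->
  \sum_(j in P) a j `^ t1 * b j `^ t2 <=
  (\sum_(j in P) a j) `^ t1 * (\sum_(j in P) b j) `^ t2.
Proof.
move=> a_ge0 b_ge0 t1_ge0 t2_ge0 t12.
set SA := \sum_(j in P) a j; set SB := \sum_(j in P) b j.
have SA_ge0 : 0 <= SA by rewrite sumr_ge0.
have SB_ge0 : 0 <= SB by rewrite sumr_ge0.
have [SA_0|SA_neq0] := eqVneq SA 0.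
  have [t1_0|t1_neq0] := eqVneq t1 0.
    have t2_1 : t2 = 1 by rewrite -t12 t1_0 add0r.
    under eq_bigr do rewrite t1_0 t2_1 powRr0 powRr1 // mul1r.
    by rewrite t1_0 t2_1 powRr0 powRr1 // mul1r.
  have a_0 := psumr_eq0P (fun j _ => a_ge0 j) SA_0.
  rewrite big1 ?mulr_ge0 ?powR_ge0 // => j jP.
  by rewrite a_0 // powR0 // mul0r.
have [SB_0|SB_neq0] := eqVneq SB 0.
  have [t2_0|t2_neq0] := eqVneq t2 0.
    have t1_1 : t1 = 1 by rewrite -t12 t2_0 addr0.
    under eq_bigr do rewrite t2_0 t1_1 powRr0 powRr1 // mulr1.
    by rewrite t2_0 t1_1 powRr0 powRr1 // mulr1.
  have b_0 := psumr_eq0P (fun j _ => b_ge0 j) SB_0.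
  rewrite big1 ?mulr_ge0 ?powR_ge0 // => j jP.
  by rewrite b_0 // powR0 // mulr0.
(* Normalizing by SA and SB reduces the claim to the weighted AM-GM inequality. *)
have term j : a j `^ t1 * b j `^ t2 <=
    SA `^ t1 * SB `^ t2 * (t1 * (a j / SA) + t2 * (b j / SB)).
  rewrite -{1}[a j](divfK SA_neq0) -{1}[b j](divfK SB_neq0).
  rewrite (powRM _ (divr_ge0 (a_ge0 j) SA_ge0) SA_ge0).
  rewrite (powRM _ (divr_ge0 (b_ge0 j) SB_ge0) SB_ge0).
  rewrite mulrACA mulrC ler_wpM2l ?mulr_ge0 ?powR_ge0 //.
  by rewrite weighted_amgm ?divr_ge0.
apply: le_trans (ler_sum _ (fun j _ => term j)) _.
rewrite -mulr_sumr big_split /= -!mulr_sumr -!mulr_suml !mulfV // !mulr1 t12.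
by rewrite mulr1.
Qed.

End weighted_means.

Section hoelder_powR.
Context d (T : measurableType d) (R : realType) (mu : {measure set T -> \bar R}).

Lemma hoelder_powR (f g : T -> R) (t1 t2 : R) :
  measurable_fun setT f -> measurable_fun setT g ->
  (forall x, 0 <= f x) -> (forall x, 0 <= g x) ->
  0 < t1 -> 0 < t2 -> t1 + t2 = 1 ->
  (\int[mu]_x (f x `^ t1 * g x `^ t2)%:E <=
   (\int[mu]_x (f x)%:E) `^ t1 * (\int[mu]_x (g x)%:E) `^ t2)%E.
Proof.
move=> mf mg f0 g0 t1_gt0 t2_gt0 t12.
have mpow (h : T -> R) (t : R) :
    measurable_fun setT h -> measurable_fun setT (fun x => h x `^ t).
  by move=> mh; exact: measurableT_comp (measurable_powR t) mh.
have t1V_gt0 : 0 < t1^-1 by rewrite invr_gt0.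
have t2V_gt0 : 0 < t2^-1 by rewrite invr_gt0.
have := hoelder mu (mpow f t1 mf) (mpow g t2 mg) t1V_gt0 t2V_gt0.
rewrite !invrK => /(_ t12).
rewrite Lnorm1 !unlock /Lnorm !invrK.
have normE (h : T -> R) (t : R) : 0 < t -> (forall x, 0 <= h x) ->
    (\int[mu]_x `|(EFin \o (fun x => (h x `^ t)%R)) x| `^ t^-1 = \int[mu]_x (h x)%:E)%E.
  move=> t_gt0 h0; apply: eq_integral => x _ /=.
  by rewrite ger0_norm ?powR_ge0 // -powRrM mulfV ?gt_eqF // powRr1.
rewrite !normE //.
by under eq_integral => x _ do rewrite /= ger0_norm ?mulr_ge0 ?powR_ge0 //.
Qed.

Lemma Rintegral_powR_interp (D : set T) (F : T -> R) (p1 p2 t1 t2 : R) :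
  measurable D -> measurable_fun D F ->
  0 < p1 -> 0 < p2 -> 0 <= t1 -> 0 <= t2 -> t1 + t2 = 1 ->
  mu.-integrable D (EFin \o (fun x => F x `^ p1)) ->
  mu.-integrable D (EFin \o (fun x => F x `^ p2)) ->
  \int[mu]_(x in D) F x `^ (t1 * p1 + t2 * p2) <=
  (\int[mu]_(x in D) F x `^ p1) `^ t1 * (\int[mu]_(x in D) F x `^ p2) `^ t2.
Proof.
move=> mD mF p1_gt0 p2_gt0 t1_ge0 t2_ge0 t12 iF1 iF2.
have [t1_0|t1_neq0] := eqVneq t1 0.
  have t2_1 : t2 = 1 by rewrite -t12 t1_0 add0r.
  rewrite t1_0 t2_1 mul0r add0r mul1r powRr0 powRr1 ?mul1r //.
  by apply: Rintegral_ge0 => x _; exact: powR_ge0.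
have [t2_0|t2_neq0] := eqVneq t2 0.
  have t1_1 : t1 = 1 by rewrite -t12 t2_0 addr0.
  rewrite t2_0 t1_1 mul0r addr0 mul1r powRr0 powRr1 ?mulr1 //.
  by apply: Rintegral_ge0 => x _; exact: powR_ge0.
have t1_gt0 : 0 < t1 by rewrite lt0r t1_neq0.
have t2_gt0 : 0 < t2 by rewrite lt0r t2_neq0.
set p := t1 * p1 + t2 * p2.
have p_gt0 : 0 < p by rewrite addr_gt0 ?mulr_gt0.
pose G : T -> R := patch (fun=> 0) D F.
have mG : measurable_fun setT G := (measurable_restrictT F mD).1 mF.
have mGpow q : measurable_fun setT (fun x => G x `^ q).
  exact: measurableT_comp (measurable_powR q) mG.
have GE q : 0 < q ->
    (\int[mu]_(x in D) (F x `^ q)%:E = \int[mu]_x (G x `^ q)%:E)%E.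
  move=> q_gt0; rewrite integral_mkcond; apply: eq_integral => x _.
  by rewrite /G /patch; case: ifP => // _; rewrite powR0 ?gt_eqF.
have := hoelder_powR _ _ _ _ (mGpow p1) (mGpow p2)
  (fun x => powR_ge0 _ _) (fun x => powR_ge0 _ _) t1_gt0 t2_gt0 t12.
have powE x : (G x `^ p1) `^ t1 * (G x `^ p2) `^ t2 = G x `^ p.
  rewrite -!powRrM [p1 * t1]mulrC [p2 * t2]mulrC -powRD //.
  by rewrite (gt_eqF p_gt0).
under eq_integral do rewrite powE.
have fin1 : (\int[mu]_(x in D) (F x `^ p1)%:E)%E \is a fin_num := integrable_fin_num mD iF1.
have fin2 : (\int[mu]_(x in D) (F x `^ p2)%:E)%E \is a fin_num := integrable_fin_num mD iF2.
rewrite -!GE // -(fineK fin1) -(fineK fin2) !poweR_EFin -EFinM => le_p.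
have finp : (\int[mu]_(x in D) (F x `^ p)%:E)%E \is a fin_num.
  rewrite ge0_fin_numE ?(le_lt_trans le_p) ?ltry //.
  by apply: integral_ge0 => x _; rewrite lee_fin powR_ge0.
by rewrite -lee_fin /Rintegral fineK.
Qed.

End hoelder_powR.

Section dominated_Rintegral.
Context d (T : measurableType d) (R : realType) (mu : {measure set T -> \bar R}).

Lemma le_normr_Rintegral_dominated (D : set T) (phi g : T -> R) :
  measurable D -> measurable_fun D phi -> mu.-integrable D (EFin \o g) ->
  (forall x, D x -> `|phi x| <= g x) ->
  `|\int[mu]_(x in D) phi x| <= \int[mu]_(x in D) g x.
Proof.
move=> mD mphi ig phi_le.
have iphi : mu.-integrable D (EFin \o phi).
  apply: le_integrable ig => //; first exact/measurable_EFinP.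
  by move=> x Dx; rewrite /= lee_fin (le_trans (phi_le x Dx)) ?ler_norm.
apply: le_trans (le_normr_Rintegral mD iphi) _.
by apply: le_Rintegral => //; exact: integrable_norm.
Qed.

End dominated_Rintegral.

Lemma sqrt_sqrD_le_normD (R : rcfType) (a b : R) :
  Num.sqrt (a ^+ 2 + b ^+ 2) <= `|a| + `|b|.
Proof.
rewrite -[X in _ <= X]ger0_norm ?addr_ge0 // -[X in _ <= X]sqrtr_sqr.
rewrite ler_sqrt ?sqr_ge0 //.
rewrite -[a ^+ 2]real_normK ?num_real // -[b ^+ 2]real_normK ?num_real //.
by have := normr_ge0 a; have := normr_ge0 b; nra.
Qed.

Section parametric_integral.
Context d1 d2 (T1 : measurableType d1) (T2 : measurableType d2) (R : realType).
Variable m2 : {sigma_finite_measure set T2 -> \bar R}.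

(* Split the integrand into its positive and negative parts, each of which is
   handled by the Fubini-Tonelli measurability of partial integrals. *)
Lemma measurable_Rintegral_param (D : set T2) (h : T1 * T2 -> R) :
  measurable D -> measurable_fun setT h ->
  measurable_fun setT (fun x => \int[m2]_(y in D) h (x, y)).
Proof.
move=> mD mh.
pose H : T1 * T2 -> \bar R := (EFin \o h) \_ (setT `*` D).
have mH : measurable_fun setT H.
  apply/(measurable_restrictT _ _).1; first exact: measurableX.
  apply: (measurable_funS measurableT) => //; exact/measurable_EFinP.
have inD x y : ((x, y) \in [set: T1] `*` D) = (y \in D).
  by apply/idP/idP => [/set_mem[_ ?]|/set_mem ?]; apply/mem_set.
have HE x : (\int[m2]_(y in D) (h (x, y))%:E =
    fubini_F m2 H^\+ x - fubini_F m2 H^\- x)%E.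
  rewrite integralE /fubini_F [X in (X - _)%E]integral_mkcond.
  rewrite [X in (_ - X)%E]integral_mkcond; congr (_ - _)%E;
    apply: eq_integral => y _; rewrite /patch ?funeposE ?funenegE /H /patch inD;
    by case: ifPn => //; rewrite ?oppe0 maxxx.
rewrite (_ : (fun x => _) = fine \o (fubini_F m2 H^\+ \- fubini_F m2 H^\-)%E).
  apply: measurableT_comp; first exact: fine_measurable.
  apply: emeasurable_funB; apply: measurable_fun_fubini_tonelli_F.
  - exact: measurable_funepos.
  - exact: funepos_ge0.
  - exact: measurable_funeneg.
  - exact: funeneg_ge0.
by apply/funext => x /=; rewrite /Rintegral HE.
Qed.

End parametric_integral.

Section min_max_over_families.
Context {R : realType} {I : finType} {V : Type}.
Variables (admissible : V -> Prop) (transverse : V -> I -> Prop).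

Definition max_transverse {A : nat} (Vs : 'I_A -> V) (L : I -> R) : R :=
  \big[Num.max/0]_(i | `[< forall a, transverse (Vs a) i >]) L i.

Definition minmax_values (A : nat) (L : I -> R) : set R :=
  [set y | exists Vs : 'I_A -> V, (forall a, admissible (Vs a)) /\
     y = max_transverse Vs L].

Lemma max_transverse_ge0 A (Vs : 'I_A -> V) L : 0 <= max_transverse Vs L.
Proof. exact: bigmax_ge_id. Qed.

Lemma inf_minmax_ge0 A L : 0 <= inf (minmax_values A L).
Proof.
have [->|/set0P values_ne0] := eqVneq (minmax_values A L) set0; first by rewrite inf0.
by apply: lb_le_inf values_ne0 _ => _ [Vs [_ ->]]; exact: max_transverse_ge0.
Qed.

Hypothesis admissible_exists : exists v0, admissible v0.

(* Each value is a maximum over a subset of the finite type I, hence there are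
   finitely many values and the infimum is a minimum. *)
Lemma minmax_attained A L : exists2 Vs : 'I_A -> V,
  forall a, admissible (Vs a) & inf (minmax_values A L) = max_transverse Vs L.
Proof.
have [v0 v0_adm] := admissible_exists.
pose f (S : {set I}) := \big[Num.max/0]_(i in S) L i.
pose tr (Vs : 'I_A -> V) := [set i | `[< forall a, transverse (Vs a) i >]]%SET.
have fE Vs : max_transverse Vs L = f (tr Vs).
  by apply: eq_bigl => i; rewrite inE.
pose P S := `[< exists2 Vs, forall a, admissible (Vs a) & S = tr Vs >].
have P0 : P (tr (fun=> v0)) by apply/asboolP; exists (fun=> v0).
have [S /asboolP[Vs Vs_adm ->] Smin] := @Order.TotalTheory.arg_minP _ R _ _ P f P0.
exists Vs => //; apply/le_anti/andP; split.
  apply: ge_inf; first by exists 0 => _ [Ws [_ ->]]; exact: max_transverse_ge0.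
  by exists Vs.
apply: lb_le_inf; first by exists (max_transverse Vs L), Vs.
move=> _ [Ws [Ws_adm ->]]; rewrite !fE; apply: Smin.
by apply/asboolP; exists Ws.
Qed.

(* Concatenating an A1-family and an A2-family gives an (A1 + A2)-family
   whose transverse indices are transverse for both. *)
Lemma minmax_cat_le A1 A2 (L L1 L2 : I -> R) (t1 t2 : R) :
  (forall i, 0 <= L1 i) -> (forall i, 0 <= L2 i) -> 0 <= t1 -> 0 <= t2 ->
  (forall i, L i <= L1 i `^ t1 * L2 i `^ t2) ->
  inf (minmax_values (A1 + A2) L) <=
  inf (minmax_values A1 L1) `^ t1 * inf (minmax_values A2 L2) `^ t2.
Proof.
move=> L1_ge0 L2_ge0 t1_ge0 t2_ge0 L_le.
have [Vs1 Vs1_adm ->] := minmax_attained A1 L1.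
have [Vs2 Vs2_adm ->] := minmax_attained A2 L2.
pose Vs a := match fintype.split a with inl a1 => Vs1 a1 | inr a2 => Vs2 a2 end.
have Vs_adm a : admissible (Vs a) by rewrite /Vs; case: fintype.split.
apply: (@le_trans _ _ (max_transverse Vs L)).
  apply: ge_inf; last by exists Vs.
  by exists 0 => _ [Ws [_ ->]]; exact: max_transverse_ge0.
apply: bigmax_le; first by rewrite mulr_ge0 ?powR_ge0.
move=> i /asboolP tr_i; apply: le_trans (L_le i) _.
apply: ler_pM; rewrite ?powR_ge0 //; apply: ge0_ler_powR;
  rewrite ?nnegrE ?max_transverse_ge0 // /max_transverse;
  apply: le_bigmax_cond; apply/asboolP.
- by move=> a1; have := tr_i (lshift A2 a1); rewrite /Vs (unsplitK (inl a1)).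
- by move=> a2; have := tr_i (rshift A1 a2); rewrite /Vs (unsplitK (inr a2)).
Qed.

End min_max_over_families.

Section lebn_measure.
Variable R : realType.

Definition cube (n : nat) (a : R) : set (n.-tuple R) :=
  [set x | forall i, `|tnth x i| <= a].

Lemma measurable_cube n a : measurable (cube n a).
Proof.
have -> : cube n a = \bigcap_(i in [set: 'I_n]) (@tnth n R ^~ i @^-1` `[- a, a]).
  apply/seteqP; split => x /= x_cube i.
    by move=> _; rewrite /= in_itv /= -ler_norml.
  by have := x_cube i I; rewrite /= in_itv /= -ler_norml.
apply: fin_bigcap_measurable; first exact: finite_finset.
by move=> i _; rewrite -[X in measurable X]setTI; exact: measurable_tnth.
Qed.

Lemma ler_norm_tnth_sum n (x : n.-tuple R) i :
  `|tnth x i| <= \sum_(j < n) `|tnth x j|.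
Proof. by rewrite (bigD1 i) //= lerDl sumr_ge0. Qed.

Lemma sigma_finite_cube n (mu : {measure set (n.-tuple R) -> \bar R}) :
  (forall a, (mu (cube n a) < +oo)%E) -> sigma_finite setT mu.
Proof.
move=> mu_cube; exists (fun k => cube n k%:R); last first.
  by move=> k; split; [exact: measurable_cube | exact: mu_cube].
apply/seteqP; split => // x _.
exists (Num.Def.archi_bound (\sum_(j < n) `|tnth x j|)) => //= i.
apply: le_trans (ltW (archi_boundP _)); first exact: ler_norm_tnth_sum.
exact: sumr_ge0.
Qed.

Section lebn_step.
Variables (n : nat) (mu : {sigma_finite_measure set (n.-tuple R) -> \bar R}).
Hypothesis mu_cube : forall a, (mu (cube n a) < +oo)%E.

Definition tuple_cons (p : R * n.-tuple R) : n.+1.-tuple R := [tuple of p.1 :: p.2].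

Definition lebn_step := pushforward (lebesgue_measure \x mu)%E tuple_cons.

(* The library's measure instance on a pushforward needs the measurability of
   the map, which cannot be inferred; [refine] leaves it as a goal. *)
Let lebn_step_measure : {measure set (n.+1.-tuple R) -> \bar R}.
Proof. by refine [the measure _ _ of lebn_step]; exact: measurable_cons. Defined.

HB.instance Definition _ := Measure.copy lebn_step lebn_step_measure.

Lemma tuple_cons_cube a :
  tuple_cons @^-1` cube n.+1 a = `[- a, a]%classic `*` cube n a.
Proof.
apply/seteqP; split => -[t v]; rewrite /preimage /cube /=.
  move=> tv_cube; split; first by have := tv_cube ord0; rewrite in_itv /= -ler_norml.
  by move=> j; have := tv_cube (lift ord0 j); rewrite tnthS.
rewrite in_itv /= -ler_norml => -[t_le v_cube] i.
by case: (unliftP ord0 i) => [j ->|->]; rewrite ?tnthS.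
Qed.

Lemma lebn_step_cube a : (lebn_step (cube n.+1 a) < +oo)%E.
Proof.
rewrite /lebn_step /pushforward tuple_cons_cube product_measure1E //; last first.
  exact: measurable_cube.
apply: lte_mul_pinfty => //.
have /= -> := @lebesgue_measure_itv R `[- a, a]%R.
by case: ifP => // _; rewrite -EFinN -EFinD ltry.
Qed.

HB.instance Definition _ := Measure_isSigmaFinite.Build _ _ _ lebn_step
  (@sigma_finite_cube _ _ lebn_step_cube).

Lemma lebn_step_sigma_finite : exists nu : {sigma_finite_measure set _ -> \bar R},
  lebn_step = nu /\ forall a, (nu (cube n.+1 a) < +oo)%E.
Proof. by exists lebn_step; split => //; exact: lebn_step_cube. Qed.

End lebn_step.

Lemma lebn_sigma_finite n : exists mu : {sigma_finite_measure set (n.-tuple R) -> \bar R},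
  lebn R n = mu /\ forall a, (mu (cube n a) < +oo)%E.
Proof.
elim: n => [|n [mu [lebnE mu_cube]]].
  exists (@dirac _ (0.-tuple R) [tuple] R); split => // a.
  by rewrite /= /dirac indicE; case: (_ \in _); rewrite ltry.
have [nu [nuE nu_cube]] := lebn_step_sigma_finite _ _ mu_cube.
by exists nu; split => //=; rewrite lebnE -nuE.
Qed.

End lebn_measure.

Section euclidean_sets.
Variable R : realType.

Lemma measurable_nth n i : measurable_fun setT (fun x : n.-tuple R => nth 0 x i).
Proof.
have [i_lt|i_ge] := ltnP i n.
  rewrite (_ : (fun x => _) = @tnth n R ^~ (Ordinal i_lt)); first exact: measurable_tnth.
  by apply/funext => x; rewrite (tnth_nth 0).
rewrite (_ : (fun x => _) = cst 0) //.
by apply/funext => x; rewrite nth_default // size_tuple.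
Qed.

Lemma measurable_sqn n : measurable_fun setT (sqn R n).
Proof.
by apply: measurable_sum => i; apply: measurable_funX; exact: measurable_tnth.
Qed.

Lemma measurable_unit_ball m : measurable (unit_ball R m).
Proof.
have -> : unit_ball R m = sqn R m @^-1` `]-oo, 1[.
  by apply/seteqP; split => x /=; rewrite in_itv.
by rewrite -[X in measurable X]setTI; exact: measurable_sqn.
Qed.

Lemma measurable_eball n (c : n.-tuple R) (r : R) : measurable (eball R n c r).
Proof.
have -> : eball R n c r =
    (fun x : n.-tuple R => \sum_(i < n) (tnth x i - tnth c i) ^+ 2) @^-1` `]-oo, r ^+ 2[.
  by apply/seteqP; split => x /=; rewrite in_itv.
rewrite -[X in measurable X]setTI; apply: measurable_sum => // i.
by apply: measurable_funX; apply: measurable_funB => //; exact: measurable_tnth.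
Qed.

Lemma eball_sub_cube n (c : n.-tuple R) (r : R) :
  eball R n c r `<=` cube R n (\sum_(i < n) `|tnth c i| + `|r|).
Proof.
move=> x /= x_ball i.
have xc_le : `|tnth x i - tnth c i| <= `|r|.
  rewrite -ler_sqr ?nnegrE // !real_normK ?num_real //.
  apply/ltW/(le_lt_trans _ x_ball); rewrite (bigD1 i) //= lerDl.
  by apply: sumr_ge0 => j _; exact: sqr_ge0.
have := ler_distD (tnth c i) (tnth x i) 0; rewrite !subr0 => x_le.
by apply: le_trans x_le _; rewrite addrC lerD // ler_norm_tnth_sum.
Qed.

Lemma measurable_phase m :
  measurable_fun setT (fun z : m.+1.-tuple R * m.-tuple R => phase R m z.1 z.2).
Proof.
apply: measurable_funD.
  apply: measurable_sum => i; apply: measurable_funM.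
    exact: measurableT_comp (measurable_nth _ _) measurable_fst.
  exact: measurableT_comp (measurable_tnth _) measurable_snd.
apply: measurable_funM.
  exact: measurableT_comp (measurable_nth _ _) measurable_fst.
exact: measurableT_comp (measurable_sqn _) measurable_snd.
Qed.

End euclidean_sets.

Section extension_operator.
Context {R : realType} {m : nat} {mu : {sigma_finite_measure set (m.-tuple R) -> \bar R}}.
Hypothesis lebnE : lebn R m = mu.

Let D := unit_ball R m.
Let mD : measurable D := measurable_unit_ball R m.
Let mcos : measurable_fun setT (@cos R) := continuous_measurable_fun (@continuous_cos R).
Let msin : measurable_fun setT (@sin R) := continuous_measurable_fun (@continuous_sin R).

Lemma measurable_Ext_abs (gr gi : m.-tuple R -> R) :
  measurable_fun D gr -> measurable_fun D gi -> measurable_fun setT (Ext_abs R m gr gi).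
Proof.
move=> mgr mgi.
have mext (a b : R -> R) : measurable_fun setT a -> measurable_fun setT b ->
    measurable_fun setT (fun x =>
      \int[mu]_(w in D) (a (phase R m x w) * gr w + b (phase R m x w) * gi w)).
  move=> ma mb; pose ext (g : m.-tuple R -> R) := patch (fun=> 0) D g.
  pose h z := a (phase R m z.1 z.2) * ext gr z.2 + b (phase R m z.1 z.2) * ext gi z.2.
  rewrite (_ : (fun x => _) = fun x => \int[mu]_(w in D) h (x, w)).
    apply: measurable_Rintegral_param mD _.
    apply: measurable_funD; apply: measurable_funM.
    - exact: measurableT_comp ma (measurable_phase R m).
    - exact: measurableT_comp ((measurable_restrictT gr mD).1 mgr) measurable_snd.
    - exact: measurableT_comp mb (measurable_phase R m).
    - exact: measurableT_comp ((measurable_restrictT gi mD).1 mgi) measurable_snd.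
  by apply/funext => x; apply: eq_Rintegral => w Dw; rewrite /h /ext /patch Dw.
have mRe : measurable_fun setT (ExtRe R m gr gi).
  rewrite (_ : ExtRe R m gr gi = fun x => \int[mu]_(w in D)
      (cos (phase R m x w) * gr w + (\- sin) (phase R m x w) * gi w)).
    exact: mext (measurable_funN msin).
  by apply/funext => x; rewrite /ExtRe lebnE; apply: eq_Rintegral => w _; rewrite mulNr.
have mIm : measurable_fun setT (ExtIm R m gr gi).
  rewrite (_ : ExtIm R m gr gi = fun x => \int[mu]_(w in D)
      (sin (phase R m x w) * gr w + cos (phase R m x w) * gi w)).
    exact: mext.
  by apply/funext => x; rewrite /ExtIm lebnE.
rewrite /Ext_abs; apply: measurableT_comp.
  by apply: continuous_measurable_fun; exact: sqrt_continuous.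
by apply: measurable_funD; exact: measurable_funX.
Qed.

Lemma integrable_restr (tau : set (m.-tuple R)) (f : m.-tuple R -> R) :
  measurable tau -> mu.-integrable D (EFin \o f) ->
  mu.-integrable D (EFin \o restr R m tau f).
Proof.
move=> mtau iF; have mF := measurable_int mu iF.
apply: le_integrable iF => //.
  apply/measurable_EFinP/measurable_funM; last exact: measurable_indic.
  exact/measurable_EFinP.
move=> w _; rewrite /= lee_fin /restr normrM indicE.
by case: (w \in tau); rewrite ?normr1 ?normr0 ?mulr1 ?mulr0.
Qed.

Lemma Ext_abs_le (gr gi : m.-tuple R -> R) :
  mu.-integrable D (EFin \o gr) -> mu.-integrable D (EFin \o gi) ->
  forall x, Ext_abs R m gr gi x <= 2 * \int[mu]_(w in D) (`|gr w| + `|gi w|).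
Proof.
move=> igr igi x.
have mgr : measurable_fun D gr by apply/measurable_EFinP; exact: measurable_int igr.
have mgi : measurable_fun D gi by apply/measurable_EFinP; exact: measurable_int igi.
have ig : mu.-integrable D (EFin \o (fun w => `|gr w| + `|gi w|)).
  apply: (eq_integrable mD _ _ _ (integrableD mD (integrable_norm igr) (integrable_norm igi))).
  by move=> w _; rewrite /= EFinD.
have mtrig (a : R -> R) :
    measurable_fun setT a -> measurable_fun D (fun w => a (phase R m x w)).
  move=> ma; apply: (measurable_funS measurableT) => //.
  exact: measurableT_comp ma (measurableT_comp (measurable_phase R m) (pair1_measurable x)).
have trig_le (c s u v : R) : `|c| <= 1 -> `|s| <= 1 -> `|c * u| + `|s * v| <= `|u| + `|v|.
  move=> c_le s_le; rewrite !normrM.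
  by rewrite lerD // -[leRHS]mul1r ler_wpM2r.
have ExtRe_le : `|ExtRe R m gr gi x| <= \int[mu]_(w in D) (`|gr w| + `|gi w|).
  rewrite /ExtRe lebnE; apply: le_normr_Rintegral_dominated => //.
    by apply: measurable_funB; apply: measurable_funM => //; exact: mtrig.
  by move=> w _; rewrite (le_trans (ler_normB _ _)) // trig_le ?cos_max ?sin_max.
have ExtIm_le : `|ExtIm R m gr gi x| <= \int[mu]_(w in D) (`|gr w| + `|gi w|).
  rewrite /ExtIm lebnE; apply: le_normr_Rintegral_dominated => //.
    by apply: measurable_funD; apply: measurable_funM => //; exact: mtrig.
  by move=> w _; rewrite (le_trans (ler_normD _ _)) // trig_le ?cos_max ?sin_max.
rewrite /Ext_abs mulr2n mulrDl mul1r (le_trans (sqrt_sqrD_le_normD R _ _)) //.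
exact: lerD.
Qed.

End extension_operator.

Section local_interpolation.
Context {R : realType} {m : nat}.
Context {mu : {sigma_finite_measure set (m.-tuple R) -> \bar R}}.
Context {nu : {sigma_finite_measure set (m.+1.-tuple R) -> \bar R}}.
Hypotheses (lebnE : lebn R m = mu) (lebnSE : lebn R m.+1 = nu).
Hypothesis nu_cube : forall a, (nu (cube R m.+1 a) < +oo)%E.
Context {fr fi : m.-tuple R -> R} {tau : set (m.-tuple R)}.
Hypothesis ifr : mu.-integrable (unit_ball R m) (EFin \o fr).
Hypothesis ifi : mu.-integrable (unit_ball R m) (EFin \o fi).
Hypothesis mtau : measurable tau.

Lemma loc_int_ge0 B q : 0 <= loc_int R m fr fi tau B q.
Proof. by rewrite /loc_int lebnSE; apply: Rintegral_ge0 => x _; exact: powR_ge0. Qed.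

(* |E f_tau| is bounded and balls have finite measure, so all the integrals
   involved are finite and Hoelder's inequality can be read in the reals. *)
Lemma loc_int_interp (c : m.+1.-tuple R) (r p1 p2 t1 t2 : R) :
  0 < p1 -> 0 < p2 -> 0 <= t1 -> 0 <= t2 -> t1 + t2 = 1 ->
  loc_int R m fr fi tau (eball R m.+1 c r) (t1 * p1 + t2 * p2) <=
  loc_int R m fr fi tau (eball R m.+1 c r) p1 `^ t1 *
  loc_int R m fr fi tau (eball R m.+1 c r) p2 `^ t2.
Proof.
move=> p1_gt0 p2_gt0 t1_ge0 t2_ge0 t12.
set B := eball R m.+1 c r.
have mB : measurable B := measurable_eball R m.+1 c r.
set G := Ext_abs R m (restr R m tau fr) (restr R m tau fi).
have igr := integrable_restr _ _ mtau ifr.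
have igi := integrable_restr _ _ mtau ifi.
have mG : measurable_fun setT G.
  by apply: (measurable_Ext_abs lebnE); apply/measurable_EFinP;
    [exact: measurable_int igr | exact: measurable_int igi].
have G_le := Ext_abs_le lebnE _ _ igr igi.
set K := 2 * _ in G_le.
have nuB : (nu B < +oo)%E.
  apply: le_lt_trans (nu_cube (\sum_(i < m.+1) `|tnth c i| + `|r|)).
  by apply: le_measure; rewrite ?inE //; [exact: measurable_cube | exact: eball_sub_cube].
have iGq q : 0 < q -> nu.-integrable B (EFin \o (fun x => G x `^ q)).
  move=> q_gt0; apply: measurable_bounded_integrable => //.
    exact: (measurable_funS measurableT) (measurableT_comp (measurable_powR q) mG).
  exists (K `^ q); split; first exact: num_real.
  move=> M KM x _; rewrite /= ger0_norm ?powR_ge0 //.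
  have G_ge0 : 0 <= G x by exact: sqrtr_ge0.
  apply/(le_trans _ (ltW KM))/ge0_ler_powR; rewrite ?nnegrE ?(ltW q_gt0) //.
  exact: le_trans G_ge0 (G_le x).
rewrite /loc_int lebnSE; apply: Rintegral_powR_interp => //.
- exact: (measurable_funS measurableT).
- exact: iGq.
- exact: iGq.
Qed.

End local_interpolation.

Lemma exists_vspace_dim {F : fieldType} {vT : vectType F} (k : nat) :
  (k <= \dim {:vT})%N -> exists V : {vspace vT}, \dim V = k.
Proof.
move=> k_le; pose X : seq vT := vbasis {:vT}.
have X_free : free X := basis_free (vbasisP _).
exists <<take k X>>%VS.
have /eqP -> : free (take k X).
  by apply: (@catl_free _ _ (drop k X)); rewrite cat_take_drop.
by rewrite size_takel // size_tuple.
Qed.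

Lemma mu_pE (R : realType) (m : nat) (I : finType) (tau : I -> set (m.-tuple R))
    (K : R) (k A : nat) (fr fi : m.-tuple R -> R) (B : set (m.+1.-tuple R)) (p : R) :
  mu_p R m I tau K k A fr fi B p =
  inf (minmax_values (fun V => \dim V = k.-1)
    (fun V i => angle_gt R m.+1 (Gmap R m @` tau i) V K^-1) A
    (fun i => loc_int R m fr fi (tau i) B p)).
Proof. by []. Qed.

Section mu_p_interpolation.
Context {R : realType} {m : nat}.
Context {mu : {sigma_finite_measure set (m.-tuple R) -> \bar R}}.
Context {nu : {sigma_finite_measure set (m.+1.-tuple R) -> \bar R}}.
Hypotheses (lebnE : lebn R m = mu) (lebnSE : lebn R m.+1 = nu).
Hypothesis nu_cube : forall a, (nu (cube R m.+1 a) < +oo)%E.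
Context {fr fi : m.-tuple R -> R} {I : finType} {tau : I -> set (m.-tuple R)}.
Hypothesis ifr : mu.-integrable (unit_ball R m) (EFin \o fr).
Hypothesis ifi : mu.-integrable (unit_ball R m) (EFin \o fi).
Hypothesis mtau : forall i, measurable (tau i).
Variables (K : R) (k : nat).
Hypothesis k_le : (k <= m.+1)%N.

Lemma mu_p_ge0 A B q : 0 <= mu_p R m I tau K k A fr fi B q.
Proof. by rewrite mu_pE inf_minmax_ge0. Qed.

Lemma mu_p_interp A1 A2 (c : m.+1.-tuple R) (r p1 p2 t1 t2 : R) :
  0 < p1 -> 0 < p2 -> 0 <= t1 -> 0 <= t2 -> t1 + t2 = 1 ->
  mu_p R m I tau K k (A1 + A2) fr fi (eball R m.+1 c r) (t1 * p1 + t2 * p2) <=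
  mu_p R m I tau K k A1 fr fi (eball R m.+1 c r) p1 `^ t1 *
  mu_p R m I tau K k A2 fr fi (eball R m.+1 c r) p2 `^ t2.
Proof.
move=> p1_gt0 p2_gt0 t1_ge0 t2_ge0 t12.
have adm_ex : exists V : {vspace 'rV[R]_m.+1}, \dim V = k.-1.
  by apply: exists_vspace_dim; rewrite dimvf /dim /= mul1n (leq_trans (leq_pred k)).
rewrite !mu_pE; apply: minmax_cat_le => // i.
- exact: (loc_int_ge0 lebnSE).
- exact: (loc_int_ge0 lebnSE).
- exact: (loc_int_interp lebnE lebnSE nu_cube ifr ifi (mtau i)).
Qed.

End mu_p_interpolation.

Lemma interpolation_exponents {R : realFieldType} {p p1 p2 a1 a2 : R} :
  0 < p -> 0 < p1 -> 0 < p2 -> a1 + a2 = 1 ->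
  p^-1 = a1 / p1 + a2 / p2 ->
  [/\ a1 * p / p1 + a2 * p / p2 = 1,
      (a1 * p / p1) * p1 + (a2 * p / p2) * p2 = p,
      (a1 * p / p1) / p = a1 / p1 & (a2 * p / p2) / p = a2 / p2].
Proof.
move=> p_gt0 p1_gt0 p2_gt0 a12 p_inv; split.
- by rewrite mulrAC [a2 * p / p2]mulrAC -mulrDl -p_inv mulVf ?gt_eqF.
- by rewrite !divfK ?gt_eqF // -mulrDl a12 mul1r.
- by rewrite mulrAC mulfK ?gt_eqF.
- by rewrite mulrAC mulfK ?gt_eqF.
Qed.

Lemma ler_powR_interp {R : realType} {x y1 y2 p p1 p2 t1 t2 a1 a2 : R} :
  0 <= x -> 0 <= y1 -> 0 <= y2 -> 0 < p ->
  t1 / p = a1 / p1 -> t2 / p = a2 / p2 -> x <= y1 `^ t1 * y2 `^ t2 ->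
  x `^ p^-1 <= (y1 `^ p1^-1) `^ a1 * (y2 `^ p2^-1) `^ a2.
Proof.
move=> x_ge0 y1_ge0 y2_ge0 p_gt0 t1E t2E x_le.
apply: le_trans (ge0_ler_powR _ _ _ x_le) _.
- by rewrite invr_ge0 ltW.
- by rewrite nnegrE.
- by rewrite nnegrE mulr_ge0 ?powR_ge0.
rewrite powRM ?powR_ge0 // -!powRrM t1E t2E.
by rewrite [a1 / p1]mulrC [a2 / p2]mulrC.
Qed.

Theorem lemma4p2 (R : realType) (m : nat) (K Rr : R) (k : nat)
  (I : finType) (tau : I -> set (m.-tuple R))
  (J : finType) (c : J -> m.+1.-tuple R) (S : {set J})
  (fr fi : m.-tuple R -> R)
  (p p1 p2 alpha1 alpha2 : R) (A A1 A2 : nat) :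
  0 < K -> 0 < Rr -> (1 <= k <= m.+1)%N ->
  (* B^{n-1} is the disjoint union of the (measurable) tau's *)
  (forall i, measurable (tau i)) ->
  (forall i j, i != j -> tau i `&` tau j = set0) ->
  \bigcup_(i in [set: I]) tau i = unit_ball R m ->
  (* the balls B_{K^2} (centers c j) decompose B_R *)
  (forall x, eucl R m.+1 x < Rr -> exists j, eball R m.+1 (c j) (K ^+ 2) x) ->
  (* U = union of the balls B_{K^2}(c j), j in S (no further constraint) *)
  (* f = fr + i fi is integrable on B^{n-1} *)
  (lebn R m).-integrable (unit_ball R m) (fun w => (fr w)%:E) ->
  (lebn R m).-integrable (unit_ball R m) (fun w => (fi w)%:E) ->
  1 <= p -> 1 <= p1 -> 1 <= p2 ->
  0 <= alpha1 <= 1 -> 0 <= alpha2 <= 1 -> alpha1 + alpha2 = 1 ->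
  p^-1 = alpha1 / p1 + alpha2 / p2 ->
  A = (A1 + A2)%N ->
  BLnorm R m I tau K k A fr fi J c S p <=
    (BLnorm R m I tau K k A1 fr fi J c S p1) `^ alpha1 *
    (BLnorm R m I tau K k A2 fr fi J c S p2) `^ alpha2.
Proof.
move=> _ _ /andP[_ k_le] mtau _ _ _ ifr ifi p_ge1 p1_ge1 p2_ge1
  /andP[a1_ge0 _] /andP[a2_ge0 _] a12 p_inv ->.
have [mu [lebnE _]] := lebn_sigma_finite R m.
have [nu [lebnSE nu_cube]] := lebn_sigma_finite R m.+1.
rewrite lebnE in ifr ifi.
have [p_gt0 p1_gt0 p2_gt0] : [/\ 0 < p, 0 < p1 & 0 < p2].
  by split; apply: lt_le_trans ltr01 _.
set t1 := alpha1 * p / p1; set t2 := alpha2 * p / p2.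
have [t12 pE t1E t2E] := interpolation_exponents p_gt0 p1_gt0 p2_gt0 a12 p_inv.
have [t1_ge0 t2_ge0] : 0 <= t1 /\ 0 <= t2.
  by split; rewrite divr_ge0 ?mulr_ge0 // ltW.
have mu_le j := mu_p_interp lebnE lebnSE nu_cube ifr ifi mtau K k k_le A1 A2
  (c j) (K ^+ 2) _ _ _ _ p1_gt0 p2_gt0 t1_ge0 t2_ge0 t12.
rewrite pE in mu_le.
rewrite /BLnorm; apply: (ler_powR_interp _ _ _ p_gt0 t1E t2E);
  try by apply: sumr_ge0 => j _; exact: mu_p_ge0.
apply: le_trans (ler_sum _ (fun j _ => mu_le j)) _.
by apply: hoelder_sum_powR => // j; exact: mu_p_ge0.
Qed.
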